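(* Let $G\in\mathfrak D_4$ and suppose $G$ contains nine distinct vertices $a_i,b_i,c_i$ ($i\in\mathbb Z/3\mathbb Z$) such that $a_ic_i,\ b_ic_i\in E(G)$ for all $i$ and $a_ib_j\in E(G)$ for all $i\ne j$ (i.e. a subgraph isomorphic to the graph $N$ with these edges). Then for every $i\in\mathbb Z/3\mathbb Z$, either $c_{i-1}c_{i+1}\in E(G)$, or there is a vertex of $G$ adjacent to all of $a_i,b_i,c_{i-1},c_{i+1}$.
   Context: $\mathfrak D_4$ is the class of (finite) maximal triangle-free graphs satisfying property $\mathscr{D}_4$. Maximal triangle-free: no triangle, and adding any new edge creates a triangle. Property $\mathscr{D}_k$: for every $m\in\{1,\dots,k\}$ and every sequence $x_1,\dots,x_{3m}$ of (not necessarily distinct) vertices there is a vertex $y$ with $|\{i\in[3m]: x_iy\in E(G)\}|\ge m+1$. *)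

From mathcomp Require Import all_boot.
Set Implicit Arguments.
Unset Strict Implicit.
Unset Printing Implicit Defensive.

Definition simple_graph (T : finType) (e : rel T) : Prop :=
  symmetric e /\ irreflexive e.

Definition triangle_free (T : finType) (e : rel T) : Prop :=
  forall x y z : T, ~ [&& e x y, e y z & e x z].

(* Maximal triangle-free: triangle-free, and adding any new edge xy
   (x <> y, xy not an edge) creates a triangle, i.e. x,y have a common neighbour. *)
Definition maximal_triangle_free (T : finType) (e : rel T) : Prop :=
  triangle_free e /\
  forall x y : T, x != y -> ~~ e x y -> exists z : T, e x z && e z y.

Definition property_D (k : nat) (T : finType) (e : rel T) : Prop :=
  forall m : nat, 1 <= m <= k ->
  forall x : 'I_(3 * m) -> T,
  exists y : T, m.+1 <= #|[set i : 'I_(3 * m) | e (x i) y]|.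

Definition in_D4 (T : finType) (e : rel T) : Prop :=
  simple_graph e /\ maximal_triangle_free e /\ property_D 4 e.

Definition nxt3 (i : 'I_3) : 'I_3 := inord ((i + 1) %% 3).
Definition prv3 (i : 'I_3) : 'I_3 := inord ((i + 2) %% 3).

From mathcomp Require Import all_boot.
Set Implicit Arguments. Unset Strict Implicit. Unset Printing Implicit Defensive.

(* If c1 c2 is not an edge, maximality gives a common neighbour z of c1 and c2.
   If z ~ c0, then N plus z is the Petersen graph, and repeatedly applying D_3 and
   D_4 to well-chosen multisets of its vertices, splitting into cases according to
   the neighbourhood of each new vertex, always produces a common neighbour of
   a0, b0, c1, c2.  If z is not adjacent to c0 (and z <> c0, else z itself works),
   a common neighbour w of c0 and z is added and the same kind of case analysis
   either finds that vertex or falls back to a Petersen configuration.  The case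
   analyses are recorded as certificate trees and checked by computation. *)

Lemma card_set_nth (T : Type) (x0 : T) (s : seq T) (P : pred T) (n : nat) :
  size s = n -> #|[set i : 'I_n | P (nth x0 s i)]| = count P s.
Proof.
move=> size_s; case: n / size_s.
rewrite cardsE cardE /enum_mem size_filter -enumT.
by rewrite -[in RHS](mkseq_nth x0 s) /mkseq -val_enum_ord !count_map.
Qed.

Lemma property_D_seq (k : nat) (T : finType) (e : rel T) (s : seq T) :
  property_D k e -> 3 %| size s -> 0 < size s %/ 3 <= k ->
  exists y, size s %/ 3 < count (e^~ y) s.
Proof.
move=> eD /dvdnP[m size_s]; rewrite size_s mulnK // => m_range.
case: s size_s => [|x0 s] size_s.
  by case/andP: m_range; rewrite -(ltn_pmul2r (isT : 0 < 3)) -size_s.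
have [y card_y] := eD m m_range (fun i : 'I_(3 * m) => nth x0 (x0 :: s) i).
by exists y; rewrite -(card_set_nth x0 (e^~ y) (etrans size_s (mulnC m 3))).
Qed.

Fixpoint all_bitseqs (n : nat) (P : bitseq -> bool) : bool :=
  if n is n'.+1 then all_bitseqs n' (P \o cons true) && all_bitseqs n' (P \o cons false)
  else P [::].

Lemma all_bitseqsP (n : nat) (P : bitseq -> bool) :
  reflect (forall bs, size bs = n -> P bs) (all_bitseqs n P).
Proof.
elim: n P => [|n IHn] P /=.
  by apply: (iffP idP) => [P0 [] | ->].
apply: (iffP andP) => [[/IHn Pt /IHn Pf] [|[] bs] // [] | Pn].
- exact: Pt.
- exact: Pf.
by split; apply/IHn => bs size_bs /=; apply: Pn; rewrite /= size_bs.
Qed.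

(* A certificate node [DNode ix ks] on the vertices 0, ..., n-1 applies D_k to the
   multiset [ix]: the resulting vertex y is adjacent to more than a third of it, and
   its neighbourhood is edge-free because e is triangle-free.  For each such
   neighbourhood the checker demands that y covers a target, or covers a set X of
   [ks]; then y becomes vertex n, adjacent to X, and the subtree of X is checked. *)
Inductive dtree := DNode of seq nat & dforest
with dforest := DNil | DCons of seq nat & dtree & dforest.

Scheme dtree_mut_ind := Induction for dtree Sort Prop
with dforest_mut_ind := Induction for dforest Sort Prop.
Combined Scheme dtree_dforest_ind from dtree_mut_ind, dforest_mut_ind.

Fixpoint forest_of (kids : seq (seq nat * dtree)) : dforest :=
  if kids is (X, t) :: kids' then DCons X t (forest_of kids') else DNil.

Definition dnode (ix : seq nat) (kids : seq (seq nat * dtree)) := DNode ix (forest_of kids).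
Definition dleaf (ix : seq nat) := DNode ix DNil.

Fixpoint forest_sets (ks : dforest) : seq (seq nat) :=
  if ks is DCons X _ ks' then X :: forest_sets ks' else [::].

Definition bounded (n : nat) (X : seq nat) := all (fun i => i < n) X.
Definition covers (bs : bitseq) (X : seq nat) := all (nth false bs) X.
Definition edge_free (E : seq (nat * nat)) (bs : bitseq) :=
  all (fun p => ~~ (nth false bs p.1 && nth false bs p.2)) E.

Section Checker.
Variables (k : nat) (targets : seq (seq nat)).

Definition D_applicable (n : nat) (ix : seq nat) :=
  [&& 3 %| size ix, 0 < size ix %/ 3 <= k & bounded n ix].

Definition heavy (ix : seq nat) (bs : bitseq) := size ix %/ 3 < count (nth false bs) ix.

Fixpoint check_tree (n : nat) (E : seq (nat * nat)) (t : dtree) {struct t} : bool :=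
  match t with
  | DNode ix ks =>
    [&& D_applicable n ix,
        all_bitseqs n (fun bs => edge_free E bs ==> heavy ix bs ==>
          has (covers bs) targets || has (covers bs) (forest_sets ks))
      & check_forest n E ks]
  end
with check_forest (n : nat) (E : seq (nat * nat)) (ks : dforest) {struct ks} : bool :=
  match ks with
  | DNil => true
  | DCons X t ks' =>
    check_tree n.+1 (E ++ [seq (i, n) | i <- X]) t && check_forest n E ks'
  end.

Variables (T : finType) (e : rel T) (x0 : T).
Hypotheses (e_tf : triangle_free e) (e_D : property_D k e).

Definition realizes (vs : seq T) (E : seq (nat * nat)) :=
  all (fun p => [&& p.1 < size vs, p.2 < size vs & e (nth x0 vs p.1) (nth x0 vs p.2)]) E.

Definition nbhd (vs : seq T) (y : T) : bitseq := [seq e v y | v <- vs].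

Definition target_covered (vs : seq T) :=
  exists2 F, F \in targets & exists y, covers (nbhd vs y) F.

Lemma nth_nbhd vs y i : nth false (nbhd vs y) i = (i < size vs) && e (nth x0 vs i) y.
Proof.
case: ltnP => i_lt; first by rewrite (nth_map x0).
by rewrite nth_default // size_map.
Qed.

Lemma D_vertex vs E ix : realizes vs E -> D_applicable (size vs) ix ->
  exists y, edge_free E (nbhd vs y) && heavy ix (nbhd vs y).
Proof.
move=> vsE /and3P[ix3 ix_range /allP ix_bnd].
have [y heavy_y] : exists y, size ix %/ 3 < count (e^~ y) [seq nth x0 vs i | i <- ix].
  by rewrite -[size ix](size_map (nth x0 vs)); apply: (property_D_seq e_D); rewrite size_map.
exists y; apply/andP; split.
  apply/allP => -[i j] /(allP vsE) /and3P[/= i_lt j_lt eij].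
  rewrite !nth_nbhd i_lt j_lt /=; apply/negP => /andP[eiy ejy].
  by apply: (e_tf (x := nth x0 vs i) (y := nth x0 vs j) (z := y)); rewrite eij ejy eiy.
rewrite /heavy; move: heavy_y; rewrite count_map; congr (_ < _).
by apply: eq_in_count => i /ix_bnd i_lt /=; rewrite nth_nbhd i_lt.
Qed.

Lemma realizes_rcons vs E y X : realizes vs E -> covers (nbhd vs y) X ->
  realizes (rcons vs y) (E ++ [seq (i, size vs) | i <- X]).
Proof.
move=> vsE /allP X_nbhd; rewrite /realizes all_cat all_map size_rcons; apply/andP; split.
  apply/allP => -[i j] /(allP vsE) /and3P[/= i_lt j_lt eij].
  by rewrite !nth_rcons i_lt j_lt !ltnS (ltnW i_lt) (ltnW j_lt).
apply/allP => i /X_nbhd; rewrite nth_nbhd /= => /andP[i_lt eiy].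
by rewrite !nth_rcons i_lt ltnn eqxx !ltnS (ltnW i_lt) leqnn eiy.
Qed.

Lemma covers_nbhd_rcons vs y y' F : bounded (size vs) F ->
  covers (nbhd (rcons vs y) y') F = covers (nbhd vs y') F.
Proof.
move=> /allP F_bnd; apply: eq_in_all => i /F_bnd i_lt.
by rewrite !nth_nbhd size_rcons nth_rcons i_lt ltnS (ltnW i_lt).
Qed.

Lemma check_sound :
  (forall t vs E, all (bounded (size vs)) targets -> realizes vs E ->
     check_tree (size vs) E t -> target_covered vs) /\
  (forall ks vs E, all (bounded (size vs)) targets -> realizes vs E ->
     check_forest (size vs) E ks ->
     forall X y, X \in forest_sets ks -> covers (nbhd vs y) X -> target_covered vs).
Proof.
apply: dtree_dforest_ind => [ix ks IHks | | X t IHt ks IHks] vs E tgt_bnd vsE /=.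
- case/and3P=> ix_ok /all_bitseqsP all_bs ks_ok.
  have [y /andP[y_free y_heavy]] := D_vertex vsE ix_ok.
  move: (all_bs _ (size_map (e^~ y) vs)); rewrite y_free y_heavy /=.
  case/orP=> /hasP[F F_in F_cov]; first by exists F => //; exists y.
  exact: IHks vs E tgt_bnd vsE ks_ok F y F_in F_cov.
- by [].
- case/andP=> t_ok ks_ok X' y; rewrite inE => /predU1P[-> X_cov|].
    2: exact: IHks vs E tgt_bnd vsE ks_ok X' y.
  have tgt_bnd' : all (bounded (size (rcons vs y))) targets.
    by apply: sub_all tgt_bnd => F; apply: sub_all => i; rewrite size_rcons ltnS; apply: ltnW.
  have [|F F_in [y' F_cov]] := IHt _ _ tgt_bnd' (realizes_rcons vsE X_cov).
    by rewrite size_rcons.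
  by exists F => //; exists y'; rewrite -(covers_nbhd_rcons y) // (allP tgt_bnd).
Qed.

Lemma check_tree_sound t vs E : realizes vs E -> check_tree (size vs) E t ->
  all (bounded (size vs)) targets -> target_covered vs.
Proof. by move=> vsE t_ok tgt_bnd; apply: check_sound.1 t_ok. Qed.

End Checker.

(* Vertices of N are numbered a0, a1, a2, b0, b1, b2, c0, c1, c2 = 0, ..., 8. *)
Definition N_edges : seq (nat * nat) :=
  [:: (0, 6); (3, 6); (1, 7); (4, 7); (2, 8); (5, 8);
      (0, 4); (0, 5); (1, 3); (1, 5); (2, 3); (2, 4)].

(* N with a common neighbour 9 of c0, c1, c2: the Petersen graph. *)
Definition petersen_edges := N_edges ++ [:: (9, 7); (9, 8); (9, 6)].

(* N with a common neighbour 9 of c1, c2 and a common neighbour 10 of c0 and 9. *)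
Definition N_detour_edges := N_edges ++ [:: (9, 7); (9, 8); (10, 6); (10, 9)].

Definition petersen_certificate : dtree :=
  dnode [:: 1; 2; 3; 4; 5; 6; 7; 8; 9] [::
    ([:: 2; 5; 6; 7], dnode [:: 0; 1; 3; 4; 5; 6; 7; 8; 9] [::
        ([:: 1; 4; 6; 8], dnode [:: 0; 1; 2; 3; 4; 5; 7; 8; 9] [::
            ([:: 0; 1; 2; 9], dleaf [:: 0; 1; 2; 4; 5; 6; 7; 8; 9; 10; 11; 12]);
            ([:: 3; 4; 5; 9], dleaf [:: 1; 2; 3; 4; 5; 6; 7; 8; 9; 10; 11; 12])
          ]);
        ([:: 3; 4; 5; 9], dnode [:: 0; 1; 2; 3; 4; 6; 7; 8; 9] [::
            ([:: 1; 4; 6; 8], dleaf [:: 1; 2; 3; 4; 5; 6; 7; 8; 9; 10; 11; 12]);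
            ([:: 0; 1; 2; 9], dleaf [:: 0; 1; 2; 3; 4; 5; 6; 7; 9; 10; 11; 12])
          ])
      ]);
    ([:: 1; 4; 6; 8], dnode [:: 0; 2; 3; 4; 5; 6; 7; 8; 9] [::
        ([:: 2; 5; 6; 7], dnode [:: 0; 1; 2; 3; 4; 5; 7; 8; 9] [::
            ([:: 0; 1; 2; 9], dleaf [:: 0; 1; 2; 4; 5; 6; 7; 8; 9; 10; 11; 12]);
            ([:: 3; 4; 5; 9], dleaf [:: 1; 2; 3; 4; 5; 6; 7; 8; 9; 10; 11; 12])
          ]);
        ([:: 3; 4; 5; 9], dnode [:: 0; 1; 2; 3; 5; 6; 7; 8; 9] [::
            ([:: 2; 5; 6; 7], dleaf [:: 1; 2; 3; 4; 5; 6; 7; 8; 9; 10; 11; 12]);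
            ([:: 0; 1; 2; 9], dleaf [:: 0; 1; 2; 3; 4; 5; 6; 8; 9; 10; 11; 12])
          ])
      ]);
    ([:: 3; 4; 5; 9], dnode [:: 0; 1; 2; 4; 5; 6; 7; 8; 9] [::
        ([:: 2; 5; 6; 7], dnode [:: 0; 1; 2; 3; 4; 6; 7; 8; 9] [::
            ([:: 1; 4; 6; 8], dleaf [:: 1; 2; 3; 4; 5; 6; 7; 8; 9; 10; 11; 12]);
            ([:: 0; 1; 2; 9], dleaf [:: 0; 1; 2; 3; 4; 5; 6; 7; 9; 10; 11; 12])
          ]);
        ([:: 1; 4; 6; 8], dnode [:: 0; 1; 2; 3; 5; 6; 7; 8; 9] [::
            ([:: 2; 5; 6; 7], dleaf [:: 1; 2; 3; 4; 5; 6; 7; 8; 9; 10; 11; 12]);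
            ([:: 0; 1; 2; 9], dleaf [:: 0; 1; 2; 3; 4; 5; 6; 8; 9; 10; 11; 12])
          ]);
        ([:: 0; 1; 2; 9], dnode [:: 0; 1; 2; 3; 4; 5; 6; 7; 8] [::
            ([:: 2; 5; 6; 7], dleaf [:: 0; 1; 2; 3; 4; 5; 6; 7; 9; 10; 11; 12]);
            ([:: 1; 4; 6; 8], dleaf [:: 0; 1; 2; 3; 4; 5; 6; 8; 9; 10; 11; 12])
          ])
      ])
  ].

Definition N_detour_certificate : dtree :=
  dnode [:: 0; 1; 2; 3; 4; 5; 7; 8; 9] [::
    ([:: 0; 1; 2; 9], dnode [:: 0; 1; 2; 3; 4; 5; 6; 7; 8] [::
        ([:: 2; 5; 6; 7], dnode [:: 0; 1; 3; 4; 5; 6; 7; 8; 9] [::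
            ([:: 1; 4; 6; 8], dleaf [:: 0; 1; 2; 4; 5; 6; 7; 8; 9; 11; 12; 13]);
            ([:: 3; 4; 5; 9], dleaf [:: 0; 1; 2; 3; 4; 5; 6; 7; 9; 11; 12; 13]);
            ([:: 1; 4; 6; 9], dleaf [:: 0; 1; 2; 4; 5; 6; 7; 8; 9; 11; 12; 13]);
            ([:: 4; 5; 6; 9], dleaf [:: 0; 1; 2; 3; 4; 5; 6; 7; 9; 11; 12; 13])
          ]);
        ([:: 1; 4; 6; 8], dnode [:: 0; 2; 3; 4; 5; 6; 7; 8; 9] [::
            ([:: 2; 5; 6; 7], dleaf [:: 0; 1; 2; 4; 5; 6; 7; 8; 9; 11; 12; 13]);
            ([:: 3; 4; 5; 9], dleaf [:: 0; 1; 2; 3; 4; 5; 6; 8; 9; 11; 12; 13]);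
            ([:: 2; 5; 6; 9], dleaf [:: 0; 1; 2; 4; 5; 6; 7; 8; 9; 11; 12; 13]);
            ([:: 4; 5; 6; 9], dleaf [:: 0; 1; 2; 3; 4; 5; 6; 8; 9; 11; 12; 13])
          ])
      ]);
    ([:: 3; 4; 5; 9], dnode [:: 0; 1; 2; 3; 4; 5; 6; 7; 8] [::
        ([:: 2; 5; 6; 7], dnode [:: 0; 1; 2; 3; 4; 6; 7; 8; 9] [::
            ([:: 1; 4; 6; 8], dleaf [:: 1; 2; 3; 4; 5; 6; 7; 8; 9; 11; 12; 13]);
            ([:: 0; 1; 2; 9], dleaf [:: 0; 1; 2; 3; 4; 5; 6; 7; 9; 11; 12; 13]);
            ([:: 1; 2; 6; 9], dleaf [:: 0; 1; 2; 3; 4; 5; 6; 7; 9; 11; 12; 13]);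
            ([:: 1; 4; 6; 9], dleaf [:: 1; 2; 3; 4; 5; 6; 7; 8; 9; 11; 12; 13])
          ]);
        ([:: 1; 4; 6; 8], dnode [:: 0; 1; 2; 3; 5; 6; 7; 8; 9] [::
            ([:: 2; 5; 6; 7], dleaf [:: 1; 2; 3; 4; 5; 6; 7; 8; 9; 11; 12; 13]);
            ([:: 0; 1; 2; 9], dleaf [:: 0; 1; 2; 3; 4; 5; 6; 8; 9; 11; 12; 13]);
            ([:: 1; 2; 6; 9], dleaf [:: 0; 1; 2; 3; 4; 5; 6; 8; 9; 11; 12; 13]);
            ([:: 2; 5; 6; 9], dleaf [:: 1; 2; 3; 4; 5; 6; 7; 8; 9; 11; 12; 13])
          ])
      ])
  ].

Lemma petersen_certificate_ok :
  check_tree 4 [:: [:: 0; 3; 7; 8]] 10 petersen_edges petersen_certificate.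
Proof. by vm_compute. Qed.

(* A common neighbour of c0, c1, c2 or of a0, b0, 9 completes a Petersen configuration. *)
Lemma N_detour_certificate_ok :
  check_tree 4 [:: [:: 0; 3; 7; 8]; [:: 6; 7; 8]; [:: 0; 3; 9]] 11
    N_detour_edges N_detour_certificate.
Proof. by vm_compute. Qed.

Section CopyOfN.
Variables (T : finType) (e : rel T).
Hypotheses (e_sym : symmetric e) (e_tf : triangle_free e) (e_D4 : property_D 4 e).
Hypothesis e_max : forall x y : T, x != y -> ~~ e x y -> exists z : T, e x z && e z y.
Variables a0 a1 a2 b0 b1 b2 c0 c1 c2 : T.
Hypotheses (ac0 : e a0 c0) (bc0 : e b0 c0) (ac1 : e a1 c1) (bc1 : e b1 c1)
  (ac2 : e a2 c2) (bc2 : e b2 c2) (ab01 : e a0 b1) (ab02 : e a0 b2)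
  (ab10 : e a1 b0) (ab12 : e a1 b2) (ab20 : e a2 b0) (ab21 : e a2 b1).

Lemma petersen_common_neighbour c z :
  e a0 c -> e b0 c -> e z c -> e z c1 -> e z c2 ->
  exists v, [&& e v a0, e v b0, e v c1 & e v c2].
Proof.
move=> ac bc zc zc1 zc2.
have vs_ok : realizes e a0 [:: a0; a1; a2; b0; b1; b2; c; c1; c2; z] petersen_edges.
  by rewrite /realizes /= ac bc zc zc1 zc2 ac1 bc1 ac2 bc2 ab01 ab02 ab10 ab12 ab20 ab21.
have [_ /predU1P[-> | //] [v]] :=
  check_tree_sound e_tf e_D4 vs_ok petersen_certificate_ok isT.
rewrite /covers /nbhd /= andbT => /and4P[av bv c1v c2v].
by exists v; rewrite ![e v _]e_sym av bv c1v c2v.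
Qed.

Lemma N_common_neighbour :
  c1 != c2 -> e c1 c2 \/ exists v, [&& e v a0, e v b0, e v c1 & e v c2].
Proof.
move=> c1_neq_c2; have [|not_c1c2] := boolP (e c1 c2); [by left | right].
have [z /andP[zc1 zc2]] := e_max c1_neq_c2 not_c1c2; rewrite e_sym in zc1.
have [zc0 | not_zc0] := boolP (e z c0); first exact: (petersen_common_neighbour ac0 bc0 zc0).
have [c0_eq_z | c0_neq_z] := eqVneq c0 z.
  by subst z; exists c0; rewrite zc1 zc2 ![e c0 _]e_sym ac0 bc0.
have not_c0z : ~~ e c0 z by rewrite e_sym.
have [w /andP[wc0 wz]] := e_max c0_neq_z not_c0z.
rewrite e_sym in wc0.
have vs_ok : realizes e a0 [:: a0; a1; a2; b0; b1; b2; c0; c1; c2; z; w] N_detour_edges.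
  by rewrite /realizes /= ac0 bc0 ac1 bc1 ac2 bc2 ab01 ab02 ab10 ab12 ab20 ab21 zc1 zc2 wc0 wz.
have [F] := check_tree_sound e_tf e_D4 vs_ok N_detour_certificate_ok isT.
rewrite !inE => /or3P[] /eqP-> [v]; rewrite /covers /nbhd /= andbT.
- by case/and4P=> av bv c1v c2v; exists v; rewrite ![e v _]e_sym av bv c1v c2v.
- by case/and3P=> c0v c1v c2v; apply: (petersen_common_neighbour (z := v) ac0 bc0); rewrite e_sym.
- by case/and3P=> av bv zv; exact: (petersen_common_neighbour av bv zv zc1 zc2).
Qed.

End CopyOfN.

Lemma prv3_nxt3_neq (i : 'I_3) : [/\ prv3 i != i, nxt3 i != i & prv3 i != nxt3 i].
Proof. by rewrite /prv3 /nxt3 -!val_eqE /= !inordK ?ltn_mod //; case: i => [[|[|[|]]]]. Qed.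

Theorem mainTheorem12 (T : finType) (e : rel T) (a b c : 'I_3 -> T) :
  in_D4 e ->
  (* the nine vertices a_i, b_i, c_i are pairwise distinct *)
  injective a -> injective b -> injective c ->
  (forall i j : 'I_3, a i != b j) ->
  (forall i j : 'I_3, a i != c j) ->
  (forall i j : 'I_3, b i != c j) ->
  (forall i : 'I_3, e (a i) (c i) /\ e (b i) (c i)) ->
  (forall i j : 'I_3, i != j -> e (a i) (b j)) ->
  forall i : 'I_3,
    e (c (prv3 i)) (c (nxt3 i)) \/
    exists v : T, [&& e v (a i), e v (b i), e v (c (prv3 i)) & e v (c (nxt3 i))].
Proof.
move=> [[e_sym _] [[e_tf e_max] e_D4]] _ _ c_inj _ _ _ abc ab i.
have [prv_neq nxt_neq prv_nxt_neq] := prv3_nxt3_neq i.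
apply: (N_common_neighbour e_sym e_tf e_D4 e_max (abc i).1 (abc i).2
  (abc (prv3 i)).1 (abc (prv3 i)).2 (abc (nxt3 i)).1 (abc (nxt3 i)).2).
all: try by rewrite (inj_eq c_inj).
all: by apply: ab; rewrite // eq_sym.
Qed.
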